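(* Let $G\in\mathbb{R}^{m\times n}$ with rows $G_1^T,\dots,G_m^T$, let $b\in\mathbb{R}^m$, and let $\mathcal{P}=\{x\in\mathbb{R}^n : Gx\le b\}$ be a polyhedron that has an interior point. Let $f_d:\mathbb{R}^n\to\mathbb{R}^n$ be continuously differentiable and consider the discrete system $x_{k+1}=f_d(x_k)$. Assume that for every $i\in\{1,\dots,m\}$ the function $x\mapsto b_i-G_i^Tf_d(x)$ is convex. Then $\mathcal{P}$ is an invariant set for this discrete system if and only if there exists a matrix $H\in\mathbb{R}^{m\times m}$ with all entries nonnegative such that $$HGx-Gf_d(x)\ge Hb-b\quad\text{for all } x\in\mathbb{R}^n,$$ where the inequality between vectors is componentwise.
   Context: A set $\mathcal{S}\subseteq\mathbb{R}^n$ is an invariant set for the discrete system $x_{k+1}=f_d(x_k)$ if $x_k\in\mathcal{S}$ implies $x_{k+1}\in\mathcal{S}$ for all $k\in\mathbb{N}$. *)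

From HB Require Import structures.
From mathcomp Require Import all_boot all_order all_algebra.
From mathcomp Require Import all_classical all_reals all_analysis.
Set Implicit Arguments. Unset Strict Implicit. Unset Printing Implicit Defensive.
Import Order.TTheory GRing.Theory Num.Theory.
Import numFieldNormedType.Exports.
Local Open Scope classical_set_scope.
Local Open Scope ring_scope.

Definition mxle (R : realType) (p q : nat) (A B : 'M[R]_(p, q)) : Prop :=
  forall i j, A i j <= B i j.

Definition mxnonneg (R : realType) (p q : nat) (A : 'M[R]_(p, q)) : Prop :=
  forall i j, 0 <= A i j.

Definition polyhedron (R : realType) (m n : nat) (G : 'M[R]_(m, n)) (b : 'cV[R]_m)
  : set 'cV[R]_n := [set x | mxle (G *m x) b].

Definition invariant_set (R : realType) (n : nat) (f : 'cV[R]_n -> 'cV[R]_n)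
  (S : set 'cV[R]_n) : Prop :=
  forall x : nat -> 'cV[R]_n, (forall k, x k.+1 = f (x k)) ->
    forall k, S (x k) -> S (x k.+1).

(* continuously differentiable: differentiable everywhere, and the derivative
   x |-> 'd f x is continuous (tested on every direction v; equivalent to
   continuity in operator norm in finite dimension) *)
Definition C1 (R : realType) (n : nat) (f : 'cV[R]_n -> 'cV[R]_n) : Prop :=
  (forall x, differentiable f x) /\ (forall v, continuous (fun x => 'd f x v)).

Definition convex_fun (R : realType) (n : nat) (g : 'cV[R]_n -> R) : Prop :=
  forall (x y : 'cV[R]_n) (t : R), 0 <= t <= 1 ->
    g (t *: x + (1 - t) *: y) <= t * g x + (1 - t) * g y.

(** The proof is a convex Farkas lemma.  Writing [s_k x = b_k - G_k x] for
    the slacks, invariance of the polyhedron says that each convex function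
    [x |-> s_i (f x)] is nonnegative wherever all the affine functions [s_k]
    are.  For a single affine constraint [a], the ratios [g y / a y] over
    [a y < 0] are bounded above by every ratio over [a x > 0] (convexity of
    [g] on the segment through the zero of [a] between [x] and [y]), so a
    multiplier [l >= 0] with [l a <= g] lies between the two; an induction
    on the number of constraints removes them one at a time.  The interior
    point of the polyhedron is the Slater point needed to have a constraint
    with [a x > 0], and the multipliers of row [i] form row [i] of [H]. *)
From HB Require Import structures.
From mathcomp Require Import all_boot all_order all_algebra.
From mathcomp Require Import all_classical all_reals all_analysis.
From mathcomp Require Import ring lra.
Set Implicit Arguments. Unset Strict Implicit. Unset Printing Implicit Defensive.
Import Order.TTheory GRing.Theory Num.Theory.
Import numFieldNormedType.Exports.
Local Open Scope classical_set_scope.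
Local Open Scope ring_scope.

Section ConvexFarkas.
Variables (R : realType) (V : lmodType R).

Definition is_convex_set (D : set V) := forall x y (t : R),
  D x -> D y -> 0 <= t <= 1 -> D (t *: x + (1 - t) *: y).

Definition convex_on (D : set V) (g : V -> R) := forall x y (t : R),
  D x -> D y -> 0 <= t <= 1 -> g (t *: x + (1 - t) *: y) <= t * g x + (1 - t) * g y.

Definition affine (a : V -> R) := forall x y (t : R),
  a (t *: x + (1 - t) *: y) = t * a x + (1 - t) * a y.

Lemma is_convex_setI (D E : set V) :
  is_convex_set D -> is_convex_set E -> is_convex_set (D `&` E).
Proof. by move=> cD cE x y t [Dx Ex] [Dy Ey] t01; split; [exact: cD | exact: cE]. Qed.

Lemma is_convex_set_affine_ge0 (I : Type) (a : I -> V -> R) :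
  (forall j, affine (a j)) -> is_convex_set [set z | forall j, 0 <= a j z].
Proof.
move=> aff x y t ax ay /andP[t0 t1] j; rewrite aff.
by rewrite addr_ge0 // mulr_ge0 // ?subr_ge0.
Qed.

Lemma convex_on_sub (D E : set V) (g : V -> R) :
  E `<=` D -> convex_on D g -> convex_on E g.
Proof. by move=> ED cg x y t Ex Ey; apply: cg; apply: ED. Qed.

Lemma convex_onB_affine (D : set V) (g a : V -> R) (c : R) :
  convex_on D g -> affine a -> convex_on D (fun z => g z - c * a z).
Proof.
by move=> cg aff x y t Dx Dy t01; rewrite aff; have := cg x y t Dx Dy t01; lra.
Qed.

Section OneConstraint.
Variables (D : set V) (g a : V -> R).
Hypotheses (convexD : is_convex_set D) (convex_g : convex_on D g) (affine_a : affine a).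
Hypothesis g_ge0 : forall z, D z -> 0 <= a z -> 0 <= g z.

(* [g] is nonnegative at the zero of [a] on the segment [[y, x]], where
   convexity bounds it by a positive multiple of [a x * g y - a y * g x]. *)
Lemma convex_cross_ge0 {x y} : D x -> D y -> a y < 0 -> 0 < a x ->
  0 <= a x * g y - a y * g x.
Proof.
move=> Dx Dy ay_lt0 ax_gt0; have gap_gt0 : 0 < a x - a y by lra.
pose t := a x / (a x - a y).
have t01 : 0 <= t <= 1.
  by rewrite divr_ge0 ?ler_pdivrMr ?mul1r; lra.
have t_comp : 1 - t = - a y / (a x - a y) by rewrite /t; field; lra.
have a_zero : a (t *: y + (1 - t) *: x) = 0 by rewrite affine_a t_comp /t; field; lra.
have g_zero_ge0 : 0 <= g (t *: y + (1 - t) *: x).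
  by apply: g_ge0; [exact: convexD | rewrite a_zero].
have := le_trans g_zero_ge0 (convex_g Dy Dx t01).
have -> : t * g y + (1 - t) * g x = (a x * g y - a y * g x) / (a x - a y).
  by rewrite t_comp /t; field; lra.
by rewrite pmulr_lge0 // invr_gt0.
Qed.

Lemma convex_ratio_le x y : D x -> D y -> a y < 0 -> 0 < a x ->
  g y / a y <= g x / a x.
Proof.
move=> Dx Dy ay_lt0 ax_gt0; have := convex_cross_ge0 Dx Dy ay_lt0 ax_gt0.
rewrite ler_pdivlMr // mulrAC ler_ndivrMr //; lra.
Qed.

Lemma exists_multiplier1 :
  (exists2 x0, D x0 & 0 < a x0) \/ (forall z, D z -> 0 <= a z) ->
  exists2 l : R, 0 <= l & forall z, D z -> l * a z <= g z.
Proof.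
case=> [[x0 Dx0 ax0_gt0] | a_ge0]; last first.
  by exists 0 => // z Dz; rewrite mul0r; apply: g_ge0 => //; apply: a_ge0.
pose S := [set g y / a y | y in [set y | D y /\ a y < 0]].
have S_ub : ubound S (g x0 / a x0).
  by move=> _ [y [Dy ay_lt0] <-]; exact: convex_ratio_le.
exists (Num.max 0 (sup S)) => [|z Dz]; first by rewrite le_max lexx.
have [az_lt0 | az_ge0] := ltP (a z) 0.
  rewrite -ler_ndivrMr // le_max; apply/orP; right.
  by apply: ub_le_sup; [exists (g x0 / a x0) | exists z].
have [az0 | az_gt0] := eqVneq (a z) 0; first by rewrite az0 mulr0 g_ge0 ?az0.
have {az_ge0}az_gt0 : 0 < a z by rewrite lt_def az_gt0.
have ratio_ge0 : 0 <= g z / a z by rewrite divr_ge0 // ?g_ge0 // ltW.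
rewrite -ler_pdivlMr // ge_max ratio_ge0 /=.
have [-> | /set0P S_neq0] := eqVneq S set0; first by rewrite sup0.
by apply: ge_sup => // _ [y [Dy ay_lt0] <-]; exact: convex_ratio_le.
Qed.

End OneConstraint.

(* A Slater condition: a constraint that cannot be strict at [x0], such as
   one coming from a zero row of [G], must hold everywhere. *)
Lemma exists_multipliers (m : nat) (D : set V) (g : V -> R)
    (a : 'I_m -> V -> R) (x0 : V) :
  is_convex_set D -> convex_on D g -> (forall j, affine (a j)) ->
  (forall z, D z -> (forall j, 0 <= a j z) -> 0 <= g z) ->
  D x0 -> (forall j, 0 < a j x0 \/ forall z, 0 <= a j z) ->
  exists2 l : 'I_m -> R, (forall j, 0 <= l j) &
    forall z, D z -> \sum_j l j * a j z <= g z.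
Proof.
elim: m D g a => [|m IHm] D g a convexD convex_g affine_a g_ge0 Dx0 slater.
  by exists (fun=> 0) => // z Dz; rewrite big_ord0 g_ge0 // => -[].
pose a' (j : 'I_m) := a (lift ord0 j).
pose D' := D `&` [set z | forall j, 0 <= a' j z].
have [mu mu_ge0 mu_le] :
    exists2 mu, 0 <= mu & forall z, D' z -> mu * a ord0 z <= g z.
  apply: exists_multiplier1.
  - apply: is_convex_setI => //; apply: is_convex_set_affine_ge0 => j.
    exact: affine_a.
  - by apply: convex_on_sub convex_g => z [].
  - exact: affine_a.
  - move=> z [Dz a'z_ge0] a0z_ge0; apply: g_ge0 => // j.
    by case: (unliftP ord0 j) => [k ->|->]; first exact: a'z_ge0.
  - have [a0x0_gt0 | a0_ge0] := slater ord0; [left | right => z _ //].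
    exists x0 => //; split=> // j.
    by case: (slater (lift ord0 j)) => [/ltW | /(_ x0)]; apply.
have [l' l'_ge0 l'_le] : exists2 l' : 'I_m -> R, (forall j, 0 <= l' j) &
    forall z, D z -> \sum_j l' j * a' j z <= g z - mu * a ord0 z.
  apply: IHm => //.
  - exact: convex_onB_affine.
  - by move=> j; apply: affine_a.
  - by move=> z Dz a'z_ge0; rewrite subr_ge0; apply: mu_le.
  - by move=> j; apply: slater.
exists (fun j => if unlift ord0 j is Some k then l' k else mu) => [j|z Dz].
  by case: (unlift ord0 j).
rewrite big_ord_recl unlift_none.
under eq_bigr do rewrite liftK.
by have := l'_le z Dz; lra.
Qed.

End ConvexFarkas.

Lemma nbhs_ray (R : realType) (V : normedModType R) (x0 v : V) (P : set V) :
  nbhs x0 P -> exists2 e : R, 0 < e & P (x0 + e *: v).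
Proof.
move=> Px0.
have ray_cvg : (fun e : R => x0 + e *: v) @ 0^'+ --> x0.
  apply: cvg_within_filter.
  rewrite -{2}(addr0 x0) -(scale0r v).
  exact: cvgD (cvg_cst _) (cvgZr_tmp cvg_id).
have [e [e_gt0 Pe]] := filter_ex (filterI (nbhs_right_gt 0) (ray_cvg _ Px0)).
by exists e.
Qed.

Lemma invariant_setP (R : realType) (n : nat) (f : 'cV[R]_n -> 'cV[R]_n)
    (S : set 'cV[R]_n) :
  invariant_set f S <-> forall x, S x -> S (f x).
Proof.
split=> [inv x Sx | fS x xS k]; last by rewrite xS; apply: fS.
exact: (inv (fun k => iter k f x) (fun=> erefl) 0).
Qed.

Section Polyhedron.
Variables (R : realType) (m n : nat) (G : 'M[R]_(m, n)) (b : 'cV[R]_m).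

Definition slack (k : 'I_m) (x : 'cV[R]_n) := (b - G *m x) k 0.

Lemma slackE k x : slack k x = b k 0 - (G *m x) k 0.
Proof. by rewrite /slack mxE [X in _ + X]mxE. Qed.

Lemma row_slackE k x : b k 0 - (row k G *m x) 0 0 = slack k x.
Proof. by rewrite -row_mul mxE slackE. Qed.

Lemma affine_slack k : affine (slack k).
Proof. by move=> x y t; rewrite !slackE mulmxDr -!scalemxAr !mxE; ring. Qed.

Lemma polyhedronP x : polyhedron G b x <-> forall k, 0 <= slack k x.
Proof.
split=> [Px k | s_ge0 k j]; first by rewrite slackE subr_ge0; apply: Px.
by rewrite (ord1 j) -subr_ge0 -slackE.
Qed.

(* A nonzero row [G_k] is strictly slack at an interior point [x0]: moving
   from [x0] along [G_k^T] stays in the polyhedron and increases [G_k x]. *)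
Lemma interior_polyhedron_slack x0 k : interior (polyhedron G b) x0 ->
  0 < slack k x0 \/ forall z, 0 <= slack k z.
Proof.
move=> x0_int; have /polyhedronP x0_ge0 := nbhs_singleton x0_int.
have [Gk0 | Gk_neq0] := eqVneq (\sum_l G k l ^+ 2) 0.
  right=> z; suff -> : slack k z = slack k x0 by [].
  have Gk_eq0 l : G k l = 0.
    apply/eqP; rewrite -sqrf_eq0.
    by move/psumr_eq0P: Gk0 => -> // i _; exact: sqr_ge0.
  by rewrite !slackE [(G *m _) k 0]mxE [(G *m x0) k 0]mxE !big1 // => l _;
    rewrite Gk_eq0 mul0r.
left; have GGk_gt0 : 0 < \sum_l G k l ^+ 2.
  by rewrite lt_def Gk_neq0 sumr_ge0 // => l _; exact: sqr_ge0.
have GGk : \sum_l G k l * (row k G)^T l 0 = \sum_l G k l ^+ 2.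
  by apply: eq_bigr => l _; rewrite !mxE expr2.
have [e e_gt0 /polyhedronP/(_ k)] := nbhs_ray (row k G)^T x0_int.
rewrite !slackE mulmxDr -scalemxAr !mxE GGk.
by have := mulr_gt0 e_gt0 GGk_gt0; lra.
Qed.

Lemma mxle_subr_ge0 (p q : nat) (A B : 'M[R]_(p, q)) :
  mxle A B <-> forall i j, 0 <= (B - A) i j.
Proof. by split=> le i j; have := le i j; rewrite !mxE subr_ge0. Qed.

Lemma mxle_certificateP (H : 'M[R]_m) (x y : 'cV[R]_n) :
  mxle (H *m b - b) (H *m G *m x - G *m y) <->
  forall i, \sum_k H i k * slack k x <= slack i y.
Proof.
have certE i : (H *m G *m x - G *m y - (H *m b - b)) i 0 =
    slack i y - \sum_k H i k * slack k x.
  have -> : H *m G *m x - G *m y - (H *m b - b) = (b - G *m y) - H *m (b - G *m x).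
    by rewrite mulmxBr mulmxA; apply/matrixP => k j; rewrite !mxE; ring.
  by rewrite [LHS]mxE [X in _ + X]mxE [X in _ - X]mxE.
rewrite mxle_subr_ge0; split=> [le i | le i j]; rewrite ?(ord1 j).
- by rewrite -subr_ge0 -certE.
- by rewrite certE subr_ge0.
Qed.

Variable f : 'cV[R]_n -> 'cV[R]_n.

Lemma certificate_polyhedron_stable (H : 'M[R]_m) : mxnonneg H ->
    (forall x, mxle (H *m b - b) (H *m G *m x - G *m f x)) ->
  forall x, polyhedron G b x -> polyhedron G b (f x).
Proof.
move=> H_ge0 cert x /polyhedronP s_ge0; apply/polyhedronP => i.
have /mxle_certificateP/(_ i) := cert x; apply: le_trans.
by apply: sumr_ge0 => k _; rewrite mulr_ge0.
Qed.

Lemma polyhedron_stable_certificate (x0 : 'cV[R]_n) :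
    interior (polyhedron G b) x0 ->
    (forall i, convex_fun (fun x => b i 0 - (row i G *m f x) 0 0)) ->
    (forall x, polyhedron G b x -> polyhedron G b (f x)) ->
  exists H : 'M[R]_m, mxnonneg H /\
    forall x, mxle (H *m b - b) (H *m G *m x - G *m f x).
Proof.
move=> x0_int convex_row stable.
have multipliers i : exists l : 'I_m -> R, (forall k, 0 <= l k) /\
    forall z, \sum_k l k * slack k z <= b i 0 - (row i G *m f z) 0 0.
  suff [l l_ge0 l_le] : exists2 l : 'I_m -> R, (forall k, 0 <= l k) &
      forall z, setT z -> \sum_k l k * slack k z <= b i 0 - (row i G *m f z) 0 0.
    by exists l; split=> // z; apply: l_le.
  apply: (exists_multipliers (a := slack) (x0 := x0)) => //.
  - by move=> x y t _ _; apply: convex_row.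
  - exact: affine_slack.
  - by move=> z _ /polyhedronP/stable/polyhedronP; rewrite row_slackE.
  - by move=> k; apply: interior_polyhedron_slack.
have [L L_spec] := choice multipliers.
exists (\matrix_(i, k) L i k); split=> [i k | x]; first by rewrite mxE; apply: (L_spec i).1.
apply/mxle_certificateP => i; rewrite -row_slackE.
under eq_bigr do rewrite mxE.
exact: (L_spec i).2.
Qed.

End Polyhedron.

Theorem theorem4 (R : realType) (m n : nat) (G : 'M[R]_(m, n)) (b : 'cV[R]_m)
  (f : 'cV[R]_n -> 'cV[R]_n) :
  (interior (polyhedron G b) !=set0) ->
  C1 f ->
  (forall i : 'I_m, convex_fun (fun x => b i 0 - (row i G *m f x) 0 0)) ->
  invariant_set f (polyhedron G b) <->
  exists H : 'M[R]_(m, m), mxnonneg H /\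
    forall x : 'cV[R]_n, mxle (H *m b - b) (H *m G *m x - G *m f x).
Proof.
move=> [x0 x0_int] _ convex_row; rewrite invariant_setP; split.
  exact: polyhedron_stable_certificate x0_int convex_row.
by move=> [H [H_ge0 cert]]; apply: certificate_polyhedron_stable _ H_ge0 cert.
Qed.
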